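(* Let $a,b,\beta\in\mathbb{C}$, $\theta\in(-\pi/2,\pi/2)$, and let $f_0,f_1$ be solutions of $$f'(x)+\Big(1-\frac{\beta}{x}\Big)f(x)=x^{-2}+af(x)^2+bf(x)^3$$ on the ray $\{x=re^{i\theta}:r\ge r_0\}$ (differentiable along the ray, with $f'=e^{-i\theta}\,\tfrac{d}{dr}$), such that $f_0(x)\to0$ and $f_1(x)\to0$ as $x\to\infty$ along the ray. Then there is a constant $C\in\mathbb{C}$ such that $f_1(x)-f_0(x)=e^{-x}x^{\beta}\big(C+o(1)\big)$ as $x\to\infty$ along the ray (principal branch of $x^\beta$). Moreover, if $C=0$ then $f_1=f_0$ for all sufficiently large $x$ on the ray. *)

From Stdlib Require Import Reals.
From Coquelicot Require Export Coquelicot.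
Export Rdefinitions Rfunctions.
Open Scope R_scope.

Definition cexp (z : C) : C :=
  (exp (Re z) * cos (Im z), exp (Re z) * sin (Im z)).

(* Principal argument, with values in (-PI, PI] (0 for z = 0). *)
Definition Carg (z : C) : R :=
  let x := Re z in let y := Im z in
  if Rlt_dec 0 x then atan (y / x)
  else if Rlt_dec x 0 then
    (if Rle_dec 0 y then atan (y / x) + PI else atan (y / x) - PI)
  else if Rlt_dec 0 y then PI / 2
  else if Rlt_dec y 0 then - (PI / 2)
  else 0.

Definition Clog (z : C) : C := (ln (Cmod z), Carg z).

Definition Cppow (z w : C) : C :=
  if Ceq_dec z 0 then 0%C else cexp (w * Clog z)%C.

Definition ray (theta r : R) : C := (RtoC r * cexp (RtoC theta * (0,1)))%C.

(* f solves f'(x) + (1 - beta/x) f(x) = x^-2 + a f(x)^2 + b f(x)^3 on the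
   ray {r e^{i theta} : r > r0}, where f' = e^{-i theta} d/dr along the ray. *)
Definition ray_solution (a b beta : C) (theta r0 : R) (f : C -> C) : Prop :=
  forall r : R, r0 < r ->
    exists d : C,
      is_derive (fun s : R => f (ray theta s)) r d /\
      (let x := ray theta r in
       (cexp (RtoC 0 - RtoC theta * (0,1)) * d + (1 - beta / x) * f x
        = / (x * x) + a * (f x * f x) + b * (f x * f x * f x))%C).

(* Along the ray, [cos theta > 0] makes the linear part [-f] dissipative: once a
   decaying solution is small, its energy obeys [(|f|^2)' <= -(c/2)|f|^2 + O(r^-4)]
   with [c = cos theta], so [(|f|^2 - M r^-4) e^(c r/2)] is nonincreasing and
   [f = O(r^-2)].  The difference [g = f1 - f0] then solves a linear equation whose
   coefficient is [-(1 - beta/x)] up to [psi = O(r^-2)], so [q = g e^x x^-beta]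
   satisfies [q' = psi q] along the ray.  As [psi] is integrable at infinity, [q]
   converges to some [C] at rate [O(1/r)], which is the asymptotic formula; and by
   Gronwall [|q(s)|^2 <= e^(2K/s) |q(t)|^2] for [t >= s], so if [C = 0] then [q]
   vanishes identically. *)

From Stdlib Require Import Reals Lra.
From Coquelicot Require Import Coquelicot.
Open Scope R_scope.

Lemma is_derive_eq (f : R -> R) (x l l' : R) : is_derive f x l -> l = l' -> is_derive f x l'.
Proof. intros H <-; exact H. Qed.

Lemma nonincreasing_of_derive_nonpos (F dF : R -> R) (x0 : R) :
  (forall x, x0 < x -> is_derive F x (dF x)) -> (forall x, x0 < x -> dF x <= 0) ->
  forall x y, x0 < x -> x <= y -> F y <= F x.
Proof.
intros HD Hneg x y Hx Hxy. destruct (Req_dec x y) as [<-|Hne]; [lra|].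
destruct (MVT_gen F x y dF) as [c [Hc Heq]].
- intros z Hz. apply HD. rewrite Rmin_left in Hz by lra. lra.
- intros z Hz. rewrite Rmin_left in Hz by lra. apply continuity_pt_filterlim.
  apply (ex_derive_continuous F). exists (dF z). apply HD. lra.
- rewrite Rmin_left in Hc by lra. assert (dF c <= 0) by (apply Hneg; lra). nra.
Qed.

Lemma monotone_sandwich (m M : R -> R) (x0 : R) :
  (forall s t, x0 < s -> s <= t -> m s <= m t) ->
  (forall s t, x0 < s -> s <= t -> M t <= M s) ->
  (forall s, x0 < s -> m s <= M s) ->
  exists l, forall s, x0 < s -> m s <= l <= M s.
Proof.
intros Hm HM Hle.
set (E := fun y => exists s, x0 < s /\ y = m s).
assert (Hub : forall s, x0 < s -> is_upper_bound E (M s)).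
{ intros s Hs y [t [Ht ->]]. destruct (Rle_dec t s).
  - apply Rle_trans with (m s); auto.
  - apply Rle_trans with (M t); [auto | apply HM; lra]. }
destruct (completeness E) as [l [Hl1 Hl2]].
- exists (M (x0 + 1)). apply Hub; lra.
- exists (m (x0 + 1)), (x0 + 1). split; [lra | reflexivity].
- exists l. intros s Hs. split; [apply Hl1; exists s; auto | apply Hl2, Hub; auto].
Qed.

Lemma converges_at_rate_of_derive_bound (h dh : R -> R) (x0 B : R) :
  0 < x0 ->
  (forall t, x0 < t -> is_derive h t (dh t)) ->
  (forall t, x0 < t -> Rabs (dh t) <= B / t ^ 2) ->
  exists l, forall t, x0 < t -> Rabs (h t - l) <= B / t.
Proof.
intros Hx0 Hh Hdh.
assert (HB : 0 <= B).
{ pose proof (Hdh (x0 + 1) ltac:(lra)) as H. pose proof (Rabs_pos (dh (x0 + 1))).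
  assert (0 < (x0 + 1) ^ 2) by (apply pow_lt; lra).
  apply Rmult_le_reg_r with (/ (x0 + 1) ^ 2);
    [apply Rinv_0_lt_compat; lra | unfold Rdiv in H; lra]. }
assert (Hinv : forall t, x0 < t -> is_derive (fun s => B / s) t (- (B / t ^ 2))).
{ intros t Ht. auto_derive; [lra | field; lra]. }
destruct (monotone_sandwich (fun t => h t - B / t) (fun t => h t + B / t) x0)
  as [l Hl].
- intros s t Hs Hst.
  assert (- (h t - B / t) <= - (h s - B / s)); [|lra].
  apply (nonincreasing_of_derive_nonpos (fun t => - (h t - B / t))
    (fun t => - (dh t - - (B / t ^ 2))) x0); auto.
  + intros x Hx. apply (is_derive_opp (fun t => h t - B / t)).
    apply (is_derive_minus h (fun t => B / t)); auto.
  + intros x Hx. pose proof (Hdh x Hx) as H. apply Rabs_le_between in H. lra.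
- apply (nonincreasing_of_derive_nonpos (fun t => h t + B / t)
    (fun t => dh t + - (B / t ^ 2)) x0).
  + intros x Hx. apply (is_derive_plus h (fun t => B / t)); auto.
  + intros x Hx. pose proof (Hdh x Hx) as H. apply Rabs_le_between in H. lra.
- intros s Hs. assert (0 <= B / s) by (apply Rdiv_le_0_compat; lra). lra.
- exists l. intros t Ht. apply Rabs_le_between. specialize (Hl t Ht). lra.
Qed.

Lemma nonpos_of_le_div (X C s : R) : (forall t, s < t -> X <= C / t) -> X <= 0.
Proof.
intros H. apply Rnot_lt_le. intros HX.
set (t := Rmax s 0 + Rabs C / X + 1).
assert (Hs : s < t /\ 0 < t).
{ assert (0 <= Rabs C / X) by (apply Rdiv_le_0_compat; [apply Rabs_pos | lra]).
  pose proof (Rmax_l s 0). pose proof (Rmax_r s 0). unfold t; lra. }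
assert (HC : C / t < X).
{ apply Rmult_lt_reg_r with t; [lra|]. unfold Rdiv. rewrite Rmult_assoc, Rinv_l by lra.
  assert (Rabs C / X * X = Rabs C) by (field; lra).
  pose proof (Rle_abs C). pose proof (Rmax_r s 0). unfold t. nra. }
pose proof (H t (proj1 Hs)). lra.
Qed.

Lemma exp_le_1 (y : R) : y <= 0 -> exp y <= 1.
Proof.
intros Hy. rewrite <- exp_0. destruct (Rle_lt_or_eq_dec y 0 Hy) as [Hlt | ->].
- left; apply exp_increasing; exact Hlt.
- right; reflexivity.
Qed.

Lemma Rabs_Im_le_Cmod (z : C) : Rabs (Im z) <= Cmod z.
Proof.
destruct z as [x y]. unfold Cmod, Im; simpl. rewrite <- sqrt_Rsqr_abs.
apply sqrt_le_1_alt. unfold Rsqr. nra.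
Qed.

Lemma Cmod_le_Rabs_Re_Im (z : C) : Cmod z <= Rabs (Re z) + Rabs (Im z).
Proof.
pose proof (Rabs_pos (Re z)). pose proof (Rabs_pos (Im z)).
rewrite <- (sqrt_pow2 (Rabs (Re z) + Rabs (Im z))) by lra.
unfold Cmod. apply sqrt_le_1_alt. rewrite <- (pow2_abs (fst z)), <- (pow2_abs (snd z)).
change (fst z) with (Re z). change (snd z) with (Im z). nra.
Qed.

Lemma Rabs_Re_mult_le (z w : C) : Rabs (Re (z * w)) <= Cmod z * Cmod w.
Proof. rewrite <- Cmod_mult. apply re_le_Cmod. Qed.

Lemma Rabs_Im_mult_le (z w : C) : Rabs (Im (z * w)) <= Cmod z * Cmod w.
Proof. rewrite <- Cmod_mult. apply Rabs_Im_le_Cmod. Qed.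

Lemma Cmod_le_of_Cmod2_le (z : C) (M t : R) :
  0 < t -> Cmod z ^ 2 <= M / t ^ 4 -> Cmod z <= sqrt M / t ^ 2.
Proof.
intros Ht H.
assert (Ht4 : 0 < t ^ 4) by (apply pow_lt; lra).
assert (HM : 0 <= M).
{ pose proof (pow2_ge_0 (Cmod z)). apply Rmult_le_reg_r with (/ t ^ 4);
    [apply Rinv_0_lt_compat; lra | unfold Rdiv in H; lra]. }
apply Rsqr_incr_0_var.
- unfold Rsqr. replace (sqrt M / t ^ 2 * (sqrt M / t ^ 2)) with (M / t ^ 4).
  + replace (Cmod z * Cmod z) with (Cmod z ^ 2) by ring. exact H.
  + replace (sqrt M / t ^ 2 * (sqrt M / t ^ 2)) with (sqrt M * sqrt M / t ^ 4) by (field; lra).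
    rewrite sqrt_sqrt; auto.
- apply Rdiv_le_0_compat; [apply sqrt_pos | apply pow_lt; lra].
Qed.

Lemma eventually_Cmod_le (u : R -> C) (e : R) :
  filterlim u (Rbar_locally p_infty) (locally (RtoC 0)) -> 0 < e ->
  exists M, forall r, M < r -> Cmod (u r) <= e.
Proof.
intros Hu He.
destruct (proj1 (filterlim_locally_ball_norm _ _) Hu (mkposreal e He)) as [M HM].
exists M. intros r Hr. specialize (HM r Hr).
change (Cmod (u r - 0)%C < e) in HM. replace (u r - 0)%C with (u r) in HM by ring. lra.
Qed.

Lemma filterlim_of_Cmod_le_div (u : R -> C) (B x1 : R) :
  (forall t, x1 < t -> Cmod (u t) <= B / t) ->
  filterlim u (Rbar_locally p_infty) (locally (RtoC 0)).
Proof.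
intros Hu. apply (proj2 (@filterlim_locally_ball_norm C_AbsRing _ C_NormedModule _ _ u (RtoC 0))).
intros eps.
exists (Rmax (Rmax x1 0) (Rabs B / eps)). intros t Ht.
apply Rmax_Rlt in Ht as [Ht HBt]. apply Rmax_Rlt in Ht as [Hx1 Ht0].
change (Cmod (u t - 0)%C < eps). replace (u t - 0)%C with (u t) by ring.
eapply Rle_lt_trans; [apply Hu, Hx1|].
pose proof (cond_pos eps). pose proof (Rle_abs B).
apply Rmult_lt_reg_r with t; [lra|]. replace (B / t * t) with B by (field; lra).
apply Rmult_lt_compat_r with (r := eps) in HBt; [|lra].
replace (Rabs B / eps * eps) with (Rabs B) in HBt by (field; lra). lra.
Qed.

(* Coquelicot has no product rule for [C]-valued functions of a real variable, so
   we differentiate the real and imaginary parts. *)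
Definition is_derive_ReIm (f : R -> C) (x : R) (l : C) : Prop :=
  is_derive (fun t => Re (f t)) x (Re l) /\ is_derive (fun t => Im (f t)) x (Im l).

Lemma norm_prod_le {K : AbsRing} {U V : NormedModule K} (p : U * V) :
  norm (fst p) <= norm p /\ norm (snd p) <= norm p.
Proof.
destruct p as [u v]. unfold norm at 3 4; simpl; unfold prod_norm; simpl.
pose proof (norm_ge_0 u). pose proof (norm_ge_0 v).
assert (Hs : forall x y, 0 <= x -> x <= sqrt (x * (x * 1) + y * (y * 1))).
{ intros x y Hx. rewrite <- (sqrt_pow2 x) at 1 by lra. apply sqrt_le_1_alt. nra. }
split; [apply Hs; lra | rewrite Rplus_comm; apply Hs; lra].
Qed.

Lemma is_derive_ReIm_of_is_derive (f : R -> C) (x : R) (l : C) :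
  is_derive f x l -> is_derive_ReIm f x l.
Proof.
intros [_ H]. split; (split; [apply is_linear_scal_l|]);
  intros x0 Hx0 eps; specialize (H x0 Hx0 eps); revert H; apply filter_imp;
  intros y Hy; refine (Rle_trans _ _ _ _ Hy);
  apply (norm_prod_le (minus (minus (f y) (f x0)) (scal (minus y x0) l))).
Qed.

Lemma is_derive_ReIm_eq (f : R -> C) (x : R) (l l' : C) :
  is_derive_ReIm f x l -> l = l' -> is_derive_ReIm f x l'.
Proof. intros H <-; exact H. Qed.

Lemma is_derive_ReIm_const (c : C) (x : R) : is_derive_ReIm (fun _ => c) x 0%C.
Proof. split; [apply (is_derive_const (Re c)) | apply (is_derive_const (Im c))]. Qed.

Lemma is_derive_ReIm_minus (f g : R -> C) (x : R) (df dg : C) :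
  is_derive_ReIm f x df -> is_derive_ReIm g x dg ->
  is_derive_ReIm (fun t => f t - g t)%C x (df - dg)%C.
Proof.
intros [H1 H2] [H3 H4]; split;
  [apply (is_derive_minus (fun t => Re (f t)) (fun t => Re (g t)))
  |apply (is_derive_minus (fun t => Im (f t)) (fun t => Im (g t)))]; auto.
Qed.

Lemma is_derive_ReIm_mult (f g : R -> C) (x : R) (df dg : C) :
  is_derive_ReIm f x df -> is_derive_ReIm g x dg ->
  is_derive_ReIm (fun t => f t * g t)%C x (df * g x + f x * dg)%C.
Proof.
intros [H1 H2] [H3 H4]; split; simpl.
- eapply is_derive_eq.
  + apply (is_derive_minus (fun t => Re (f t) * Re (g t)) (fun t => Im (f t) * Im (g t)));
      apply Derive.is_derive_mult; eassumption.
  + unfold minus, plus, opp, Re, Im; simpl; ring.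
- eapply is_derive_eq.
  + apply (is_derive_plus (fun t => Re (f t) * Im (g t)) (fun t => Im (f t) * Re (g t)));
      apply Derive.is_derive_mult; eassumption.
  + unfold minus, plus, opp, Re, Im; simpl; ring.
Qed.

Lemma is_derive_ReIm_scal_id (w : C) (x : R) : is_derive_ReIm (fun t => RtoC t * w)%C x w.
Proof.
split; simpl; auto_derive; auto; unfold Re, Im; ring.
Qed.

Lemma is_derive_ReIm_ln_pair (c x : R) :
  0 < x -> is_derive_ReIm (fun t => (ln t, c)) x (RtoC (/ x)).
Proof. intros Hx; split; simpl; [apply is_derive_ln; auto | apply (is_derive_const c)]. Qed.

Lemma is_derive_ReIm_cexp (h : R -> C) (x : R) (dh : C) :
  is_derive_ReIm h x dh -> is_derive_ReIm (fun t => cexp (h t)) x (cexp (h x) * dh)%C.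
Proof.
intros [H1 H2].
assert (E : is_derive (fun t => exp (Re (h t))) x (Re dh * exp (Re (h x))))
  by (apply (is_derive_comp exp (fun t => Re (h t))); [apply is_derive_exp | exact H1]).
assert (Cs : is_derive (fun t => cos (Im (h t))) x (Im dh * - sin (Im (h x))))
  by (apply (is_derive_comp cos (fun t => Im (h t))); [apply is_derive_cos | exact H2]).
assert (Sn : is_derive (fun t => sin (Im (h t))) x (Im dh * cos (Im (h x))))
  by (apply (is_derive_comp sin (fun t => Im (h t))); [apply is_derive_sin | exact H2]).
unfold cexp; split; simpl; eapply is_derive_eq;
  [apply (Derive.is_derive_mult _ _ _ _ _ E Cs) | | apply (Derive.is_derive_mult _ _ _ _ _ E Sn) |];
  unfold Re, Im; simpl; ring.
Qed.

Lemma is_derive_Cmod2 (f : R -> C) (x : R) (df : C) :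
  is_derive_ReIm f x df ->
  is_derive (fun t => Cmod (f t) ^ 2) x (2 * Re (Cconj (f x) * df)).
Proof.
intros [H1 H2]. apply (is_derive_ext (fun t => Re (f t) ^ 2 + Im (f t) ^ 2)).
{ intros t; rewrite Cmod2_alt; reflexivity. }
eapply is_derive_eq.
- apply (is_derive_plus (fun t => Re (f t) ^ 2) (fun t => Im (f t) ^ 2));
    apply is_derive_pow; eauto.
- unfold plus, Re, Im; simpl; ring.
Qed.

Lemma cexp_plus (z1 z2 : C) : (cexp z1 * cexp z2)%C = cexp (z1 + z2)%C.
Proof.
unfold cexp; simpl. unfold Re, Im; simpl. rewrite exp_plus, cos_plus, sin_plus.
unfold Cmult; simpl. f_equal; ring.
Qed.

Lemma cexp_0 : cexp 0%C = 1%C.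
Proof. unfold cexp; simpl. rewrite exp_0, cos_0, sin_0. unfold RtoC. f_equal; ring. Qed.

Definition ray_dir (th : R) : C := cexp (RtoC th * (0,1))%C.

Lemma ray_dir_eq (th : R) : ray_dir th = (cos th, sin th).
Proof.
unfold ray_dir, cexp; simpl. replace (th * 0 - 0 * 1) with 0 by ring.
replace (th * 1 + 0 * 0) with th by ring. rewrite exp_0. f_equal; ring.
Qed.

Lemma Cmod_ray_dir (th : R) : Cmod (ray_dir th) = 1.
Proof.
rewrite ray_dir_eq. unfold Cmod; simpl. pose proof (sin2_cos2 th) as H. unfold Rsqr in H.
replace (cos th * (cos th * 1) + sin th * (sin th * 1)) with 1 by lra. apply sqrt_1.
Qed.

Lemma ray_dir_neq0 (th : R) : ray_dir th <> 0%C.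
Proof. intros H. pose proof (Cmod_ray_dir th) as E. rewrite H, Cmod_0 in E. lra. Qed.

Lemma ray_dir_inv (th : R) : (cexp (RtoC 0 - RtoC th * (0,1)) * ray_dir th)%C = 1%C.
Proof.
unfold ray_dir. rewrite cexp_plus. replace (RtoC 0 - RtoC th * (0,1) + RtoC th * (0,1))%C
  with (RtoC 0) by ring. apply cexp_0.
Qed.

Lemma ray_eq (th r : R) : ray th r = (RtoC r * ray_dir th)%C.
Proof. reflexivity. Qed.

Lemma Cmod_ray (th r : R) : 0 <= r -> Cmod (ray th r) = r.
Proof. intros Hr. rewrite ray_eq, Cmod_mult, Cmod_ray_dir, Cmod_R, Rabs_pos_eq; lra. Qed.

Lemma ray_neq0 (th r : R) : 0 < r -> ray th r <> 0%C.
Proof. intros Hr H. pose proof (Cmod_ray th r) as E. rewrite H, Cmod_0 in E. lra. Qed.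

Lemma Carg_ray (th r : R) : - (PI / 2) < th < PI / 2 -> 0 < r -> Carg (ray th r) = th.
Proof.
intros Hth Hr. pose proof (cos_gt_0 th (proj1 Hth) (proj2 Hth)).
unfold Carg. rewrite ray_eq, ray_dir_eq; simpl.
replace (r * cos th - 0 * sin th) with (r * cos th) by ring.
replace (r * sin th + 0 * cos th) with (r * sin th) by ring.
destruct (Rlt_dec 0 (r * cos th)) as [_|Hn]; [|exfalso; apply Hn; nra].
replace (r * sin th / (r * cos th)) with (tan th) by (unfold tan; field; lra).
apply atan_tan; lra.
Qed.

Lemma Cppow_ray (th r : R) (beta : C) : - (PI / 2) < th < PI / 2 -> 0 < r ->
  Cppow (ray th r) beta = cexp (beta * (ln r, th))%C.
Proof.
intros Hth Hr. unfold Cppow. destruct (Ceq_dec (ray th r) 0) as [E|_].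
- exfalso; exact (ray_neq0 th r Hr E).
- unfold Clog. rewrite Cmod_ray, Carg_ray by (auto; lra). reflexivity.
Qed.

(** * Decay of solutions tending to zero *)

(* The right-hand side of the equation, written as [d/dr f(r e^{i theta})]. *)
Definition ray_field (a b beta : C) (th r : R) (U : C) : C :=
  let x := ray th r in
  (ray_dir th * (- (1 - beta / x) * U + / (x * x) + a * (U * U) + b * (U * U * U)))%C.

Lemma ray_solution_derive (a b beta : C) (th r0 r : R) (f : C -> C) :
  ray_solution a b beta th r0 f -> r0 < r ->
  is_derive_ReIm (fun s => f (ray th s)) r (ray_field a b beta th r (f (ray th r))).
Proof.
intros Hsol Hr. destruct (Hsol r Hr) as [d [Hd Heq]]. cbv zeta in Heq.
apply is_derive_ReIm_eq with d; [apply is_derive_ReIm_of_is_derive; exact Hd|].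
unfold ray_field; cbv zeta.
pose proof (ray_dir_inv th) as Hinv.
set (e := cexp (RtoC 0 - RtoC th * (0, 1))) in *.
transitivity (ray_dir th * (e * d))%C.
{ rewrite Cmult_assoc, (Cmult_comm (ray_dir th)), Hinv. ring. }
f_equal. set (U := f (ray th r)) in *.
transitivity ((e * d + (1 - beta / ray th r) * U) - (1 - beta / ray th r) * U)%C;
  [ring | rewrite Heq; ring].
Qed.

Lemma young_ineq (c m q : R) : 0 < c -> 2 * (m * q) <= c / 2 * m ^ 2 + 2 / c * q ^ 2.
Proof.
intros Hc.
assert (E : c / 2 * m ^ 2 + 2 / c * q ^ 2 - 2 * (m * q) = c / 2 * (m - 2 * q / c) ^ 2)
  by (field; lra).
assert (0 <= c / 2 * (m - 2 * q / c) ^ 2) by (apply Rmult_le_pos; [lra | apply pow2_ge_0]).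
lra.
Qed.

(* [conj U * ray_field U = -(w - Z) |U|^2 + T] with [Re w = cos th] dominating
   [Z = O(|beta|/r + |U|)], and [T = O(|U| / r^2)] absorbed by Young's inequality. *)
Lemma ray_field_energy (a b beta U : C) (th r e : R) :
  0 < cos th -> 0 < r -> Cmod U <= e -> e <= 1 ->
  Cmod beta / r + (Cmod a + Cmod b) * e <= cos th / 2 ->
  2 * Re (Cconj U * ray_field a b beta th r U)
  <= - (cos th / 2) * Cmod U ^ 2 + 2 / cos th * (/ r ^ 2) ^ 2.
Proof.
intros Hk Hr HU He Hsmall.
set (w := ray_dir th).
assert (Hw : w <> 0%C) by apply ray_dir_neq0.
assert (Hr0 : RtoC r <> 0%C) by (intros H; apply (f_equal fst) in H; simpl in H; lra).
set (Z := (beta / RtoC r + w * a * U + w * b * (U * U))%C).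
set (T := (Cconj U * w * / (ray th r * ray th r))%C).
assert (Split : (Cconj U * ray_field a b beta th r U)%C
               = (- (w - Z) * RtoC (Cmod U ^ 2) + T)%C).
{ rewrite Cmod2_conj. unfold ray_field, T, Z; cbv zeta; rewrite ray_eq; fold w.
  field. auto. }
assert (HZ : Cmod Z <= cos th / 2).
{ unfold Z. eapply Rle_trans; [apply Cmod_triangle|].
  eapply Rle_trans; [apply Rplus_le_compat_r, Cmod_triangle|].
  rewrite Cmod_div, !Cmod_mult, Cmod_R, Rabs_pos_eq by (auto; lra).
  unfold w; rewrite Cmod_ray_dir.
  pose proof (Cmod_ge_0 U). pose proof (Cmod_ge_0 a). pose proof (Cmod_ge_0 b).
  assert (Cmod U * Cmod U <= e) by nra. nra. }
assert (HReY : cos th / 2 <= Re (w - Z)).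
{ assert (Re w = cos th) by (unfold w; rewrite ray_dir_eq; reflexivity).
  replace (Re (w - Z)) with (Re w - Re Z) by (unfold Re; simpl; ring).
  pose proof (Rle_abs (Re Z)). pose proof (re_le_Cmod Z). lra. }
assert (HT : Re T <= Cmod U * / r ^ 2).
{ eapply Rle_trans; [apply Rle_trans with (Rabs (Re T)); [apply Rle_abs | apply re_le_Cmod]|].
  unfold T. rewrite Cmod_mult, Cmod_mult, Cmod_conj, Cmod_inv, Cmod_mult, Cmod_ray by
    (try apply Cmult_neq_0; try apply ray_neq0; lra).
  unfold w; rewrite Cmod_ray_dir. right; field; lra. }
rewrite Split.
replace (Re (- (w - Z) * RtoC (Cmod U ^ 2) + T))
  with (- Re (w - Z) * Cmod U ^ 2 + Re T) by (unfold Re; simpl; ring).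
pose proof (young_ineq (cos th) (Cmod U) (/ r ^ 2) Hk).
pose proof (pow2_ge_0 (Cmod U)).
assert (Re (w - Z) * Cmod U ^ 2 >= cos th / 2 * Cmod U ^ 2) by (apply Rmult_ge_compat_r; lra).
lra.
Qed.

Lemma quartic_lyapunov_rate_nonpos (c D M t v dv : R) :
  0 < c -> 8 / c <= t -> 0 <= M -> 2 * D / c <= M ->
  dv <= - c * v + D / t ^ 4 -> dv + 4 * M / t ^ 5 + c * (v - M / t ^ 4) <= 0.
Proof.
intros Hc Ht HM HMD Hdv.
assert (Ht0 : 0 < t) by (assert (0 < 8 / c) by (apply Rdiv_lt_0_compat; lra); lra).
assert (H4 : 4 / t <= c / 2) by (apply Rle_div_l; [lra|]; apply Rle_div_l in Ht; lra).
assert (HD : D <= c / 2 * M) by (apply Rle_div_l in HMD; lra).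
assert (Ht4 : 0 < / t ^ 4) by (apply Rinv_0_lt_compat, pow_lt; lra).
assert (0 <= (c / 2 * M - D) * / t ^ 4) by (apply Rmult_le_pos; lra).
assert (0 <= M * / t ^ 4 * (c / 2 - 4 / t)) by (apply Rmult_le_pos; [apply Rmult_le_pos|]; lra).
replace (4 * M / t ^ 5) with (M * / t ^ 4 * (4 / t)) by (field; lra).
unfold Rdiv in *. lra.
Qed.

(* Lyapunov function [(v t - M / t^4) e^{c t}], nonincreasing for [M] large. *)
Lemma quartic_decay_of_energy_ineq (v dv : R -> R) (c D x0 : R) :
  0 < c -> 8 / c <= x0 ->
  (forall t, x0 < t -> is_derive v t (dv t)) ->
  (forall t, x0 < t -> dv t <= - c * v t + D / t ^ 4) ->
  exists M, forall t, x0 + 1 <= t -> v t <= M / t ^ 4.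
Proof.
intros Hc Hx0 Hv Hdv.
assert (Hpos : 0 < x0) by (assert (0 < 8 / c) by (apply Rdiv_lt_0_compat; lra); lra).
set (x1 := x0 + 1).
set (M := Rmax (Rmax 0 (2 * D / c)) (v x1 * x1 ^ 4)).
assert (HM0 : 0 <= M) by (eapply Rle_trans; [apply Rmax_l | apply Rmax_l]).
assert (HMD : 2 * D / c <= M) by (eapply Rle_trans; [apply Rmax_r | apply Rmax_l]).
set (z := fun t => (v t - M / t ^ 4) * exp (c * t)).
assert (Hz : forall s t, x0 < s -> s <= t -> z t <= z s).
{ apply (nonincreasing_of_derive_nonpos z
    (fun t => (dv t + 4 * M / t ^ 5) * exp (c * t) + (v t - M / t ^ 4) * (c * exp (c * t)))).
  - intros t Ht.
    apply (Derive.is_derive_mult (fun t => v t - M / t ^ 4) (fun t => exp (c * t))).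
    + eapply is_derive_eq.
      * apply (is_derive_minus v (fun s => M / s ^ 4)); [auto|].
        auto_derive; [change (t ^ 4 <> 0); apply pow_nonzero; lra | reflexivity].
      * unfold minus, plus, opp; simpl. field. lra.
    + auto_derive; [auto | ring].
  - intros t Ht.
    replace ((dv t + 4 * M / t ^ 5) * exp (c * t) + (v t - M / t ^ 4) * (c * exp (c * t)))
      with (exp (c * t) * (dv t + 4 * M / t ^ 5 + c * (v t - M / t ^ 4))) by ring.
    apply Rmult_le_0_l; [apply Rlt_le, exp_pos|].
    apply quartic_lyapunov_rate_nonpos with D; auto; lra. }
assert (Hx1 : 0 < x1) by (unfold x1; lra).
assert (Hzx1 : z x1 <= 0).
{ unfold z. apply Rmult_le_0_r; [|apply Rlt_le, exp_pos].
  assert (v x1 <= M / x1 ^ 4); [|lra].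
  apply Rmult_le_reg_r with (x1 ^ 4); [apply pow_lt; lra|].
  replace (M / x1 ^ 4 * x1 ^ 4) with M by (field; lra). apply Rmax_r. }
exists M. intros t Ht.
assert (z t <= 0) by (apply Rle_trans with (z x1); [apply Hz; unfold x1 in *; lra | auto]).
assert (v t - M / t ^ 4 <= 0); [|lra].
apply Rmult_le_reg_r with (exp (c * t)); [apply exp_pos | unfold z in *; lra].
Qed.

Lemma exists_small_factor (s k : R) : 0 <= s -> 0 < k ->
  exists e, 0 < e /\ e <= 1 /\ s * e <= k / 4.
Proof.
intros Hs Hk. exists (Rmin 1 (k / (4 * (s + 1)))).
split; [apply Rmin_glb_lt; [lra | apply Rdiv_lt_0_compat; lra]|].
split; [apply Rmin_l|].
apply Rle_trans with ((s + 1) * (k / (4 * (s + 1)))).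
- apply Rmult_le_compat; [lra | apply Rmin_glb; [lra | apply Rlt_le, Rdiv_lt_0_compat; lra] | lra
    | apply Rmin_r].
- right. field. lra.
Qed.

Lemma decaying_ray_solution_bound (a b beta : C) (th r0 : R) (f : C -> C) :
  - (PI / 2) < th < PI / 2 -> ray_solution a b beta th r0 f ->
  filterlim (fun r => f (ray th r)) (Rbar_locally p_infty) (locally (RtoC 0)) ->
  exists A R1, 0 <= A /\ forall r, R1 < r -> Cmod (f (ray th r)) <= A / r ^ 2.
Proof.
intros Hth Hsol Hlim.
set (u := fun r => f (ray th r)). fold u in Hlim.
set (k := cos th). assert (Hk : 0 < k) by (apply cos_gt_0; lra).
pose proof (Cmod_ge_0 a). pose proof (Cmod_ge_0 b). pose proof (Cmod_ge_0 beta).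
destruct (exists_small_factor (Cmod a + Cmod b) k) as (e & He0 & He1 & Hae); [lra | lra |].
destruct (eventually_Cmod_le u e Hlim He0) as [Me HMe].
set (x0 := Rmax (Rmax r0 Me) (Rmax (4 * Cmod beta / k) (16 / k))).
assert (Hx0 : forall r, x0 < r -> r0 < r /\ Me < r /\ 4 * Cmod beta / k < r /\ 16 / k < r).
{ intros r Hr. unfold x0 in Hr. apply Rmax_Rlt in Hr as [Hl Hr].
  apply Rmax_Rlt in Hl. apply Rmax_Rlt in Hr. tauto. }
destruct (quartic_decay_of_energy_ineq (fun t => Cmod (u t) ^ 2)
  (fun t => 2 * Re (Cconj (u t) * ray_field a b beta th t (u t))) (k / 2) (2 / k) x0)
  as [M HM].
- lra.
- replace (8 / (k / 2)) with (16 / k) by (field; lra).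
  eapply Rle_trans; [apply Rmax_r | apply Rmax_r].
- intros t Ht. apply is_derive_Cmod2, (ray_solution_derive a b beta th r0); [exact Hsol|].
  apply Hx0; auto.
- intros t Ht. destruct (Hx0 t Ht) as (Hr0 & HMet & Hbt & Hkt).
  assert (Ht0 : 0 < t) by (assert (0 < 16 / k) by (apply Rdiv_lt_0_compat; lra); lra).
  assert (Cmod beta / t <= k / 4)
    by (apply Rle_div_l; [lra|]; apply Rlt_div_l in Hbt; lra).
  eapply Rle_trans; [apply ray_field_energy with (e := e); auto; fold k; lra|].
  fold k. replace ((/ t ^ 2) ^ 2) with (/ t ^ 4) by (field; lra).
  unfold Rdiv. lra.
- exists (sqrt M), (x0 + 1). split; [apply sqrt_pos|]. intros r Hr.
  apply Cmod_le_of_Cmod2_le; [|apply HM; lra].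
  pose proof (Hx0 (x0 + 1) ltac:(lra)) as [_ [_ [_ H16]]].
  assert (0 < 16 / k) by (apply Rdiv_lt_0_compat; lra). lra.
Qed.

(** * Linear equations with an integrable coefficient *)

Section LinearEquation.

Variables (q psi : R -> C) (x0 K : R).
Hypothesis x0_pos : 0 < x0.
Hypothesis K_nonneg : 0 <= K.
Hypothesis q_derive : forall t, x0 < t -> is_derive_ReIm q t (q t * psi t)%C.
Hypothesis psi_bound : forall t, x0 < t -> Cmod (psi t) <= K / t ^ 2.

Lemma Cmod2_derive : forall t, x0 < t ->
  is_derive (fun s => Cmod (q s) ^ 2) t (2 * (Cmod (q t) ^ 2 * Re (psi t))).
Proof.
intros t Ht. eapply is_derive_eq; [apply is_derive_Cmod2, q_derive, Ht|].
f_equal. rewrite Cmult_assoc, (Cmult_comm (Cconj (q t))), <- Cmod2_conj.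
unfold Re; simpl; ring.
Qed.

(* Gronwall in both directions ([sg = 1] and [sg = -1]): after time [t], [|q|^2]
   changes by a factor between [exp (-2K/t)] and [exp (2K/t)]. *)
Lemma weighted_Cmod2_monotone (sg : R) : sg = 1 \/ sg = -1 ->
  forall s t, x0 < s -> s <= t ->
  sg * (Cmod (q t) ^ 2 * exp (sg * (2 * K) / t))
  <= sg * (Cmod (q s) ^ 2 * exp (sg * (2 * K) / s)).
Proof.
intros Hsg.
apply (nonincreasing_of_derive_nonpos _
  (fun t => sg * (2 * (Cmod (q t) ^ 2 * Re (psi t)) * exp (sg * (2 * K) / t)
                  + Cmod (q t) ^ 2 * (- (sg * (2 * K) / t ^ 2) * exp (sg * (2 * K) / t)))) x0).
- intros t Ht. apply (is_derive_scal (fun t => Cmod (q t) ^ 2 * exp (sg * (2 * K) / t))).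
  apply (Derive.is_derive_mult (fun s => Cmod (q s) ^ 2) (fun s => exp (sg * (2 * K) / s)));
    [apply Cmod2_derive, Ht|].
  auto_derive; [lra | unfold Rdiv; field; lra].
- intros t Ht.
  assert (Hre : Rabs (Re (psi t)) <= K / t ^ 2)
    by (eapply Rle_trans; [apply re_le_Cmod | apply psi_bound, Ht]).
  apply Rabs_le_between in Hre.
  pose proof (pow2_ge_0 (Cmod (q t))). pose proof (exp_pos (sg * (2 * K) / t)).
  assert (Hsgre : sg * Re (psi t) <= K / t ^ 2) by (destruct Hsg; subst; lra).
  assert (E : sg * (2 * K) / t ^ 2 * sg = 2 * (K / t ^ 2))
    by (destruct Hsg; subst; field; lra).
  replace (sg * (2 * (Cmod (q t) ^ 2 * Re (psi t)) * exp (sg * (2 * K) / t)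
           + Cmod (q t) ^ 2 * (- (sg * (2 * K) / t ^ 2) * exp (sg * (2 * K) / t))))
    with (2 * (Cmod (q t) ^ 2 * exp (sg * (2 * K) / t)) * (sg * Re (psi t) - K / t ^ 2))
    by (destruct Hsg; subst; field; lra).
  apply Rmult_le_0_l; [apply Rmult_le_pos; [lra | apply Rmult_le_pos; lra] | lra].
Qed.

Lemma Cmod_bounded : exists Q, forall t, x0 + 1 <= t -> Cmod (q t) <= Q.
Proof.
set (x1 := x0 + 1).
exists (sqrt (Cmod (q x1) ^ 2 * exp (2 * K / x1))). intros t Ht.
rewrite <- (sqrt_pow2 (Cmod (q t))) by apply Cmod_ge_0.
apply sqrt_le_1_alt.
pose proof (weighted_Cmod2_monotone 1 (or_introl eq_refl) x1 t
  ltac:(unfold x1; lra) Ht) as H.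
rewrite !Rmult_1_l in H.
assert (1 <= exp (2 * K / t)).
{ pose proof (exp_ineq1_le (2 * K / t)).
  assert (0 <= 2 * K / t) by (apply Rdiv_le_0_compat; unfold x1 in Ht; lra). lra. }
pose proof (pow2_ge_0 (Cmod (q t))). nra.
Qed.

Lemma converges_at_rate : exists l B, forall t, x0 + 1 < t -> Cmod (q t - l)%C <= B / t.
Proof.
destruct Cmod_bounded as [Q HQ].
assert (Hqpsi : forall t, x0 + 1 < t -> Cmod (q t) * Cmod (psi t) <= Q * K / t ^ 2).
{ intros t Ht. unfold Rdiv. rewrite Rmult_assoc.
  apply Rmult_le_compat; [apply Cmod_ge_0 | apply Cmod_ge_0 | apply HQ; lra |].
  apply psi_bound; lra. }
destruct (converges_at_rate_of_derive_bound (fun t => Re (q t)) (fun t => Re (q t * psi t)%C)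
  (x0 + 1) (Q * K)) as [l1 Hl1]; [lra | intros t Ht; refine (proj1 (q_derive t _)); lra |
  intros t Ht; eapply Rle_trans; [apply Rabs_Re_mult_le | apply Hqpsi, Ht] |].
destruct (converges_at_rate_of_derive_bound (fun t => Im (q t)) (fun t => Im (q t * psi t)%C)
  (x0 + 1) (Q * K)) as [l2 Hl2]; [lra | intros t Ht; refine (proj2 (q_derive t _)); lra |
  intros t Ht; eapply Rle_trans; [apply Rabs_Im_mult_le | apply Hqpsi, Ht] |].
exists (l1, l2), (2 * (Q * K)). intros t Ht.
eapply Rle_trans; [apply Cmod_le_Rabs_Re_Im|].
replace (Re (q t - (l1, l2))%C) with (Re (q t) - l1) by (unfold Re; simpl; ring).
replace (Im (q t - (l1, l2))%C) with (Im (q t) - l2) by (unfold Im; simpl; ring).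
pose proof (Hl1 t Ht). pose proof (Hl2 t Ht).
replace (2 * (Q * K) / t) with (Q * K / t + Q * K / t) by (field; lra). lra.
Qed.

(* Backward Gronwall: [|q s|^2 exp (-2K/s) <= |q t|^2] for all [t >= s], and the
   right-hand side tends to [0]. *)
Lemma eq_zero_of_Cmod_le_div (B x1 : R) :
  (forall t, x1 < t -> Cmod (q t) <= B / t) -> forall s, x0 < s -> q s = 0%C.
Proof.
intros Hrate s Hs. apply Cmod_eq_0.
set (X := Cmod (q s) ^ 2 * exp (- (2 * K) / s)).
assert (HX : X <= 0).
{ apply (nonpos_of_le_div X (B * B) (Rmax (Rmax s x1) 1)). intros t Ht.
  apply Rmax_Rlt in Ht as [Ht Ht1]. apply Rmax_Rlt in Ht as [Hst Hxt].
  pose proof (weighted_Cmod2_monotone (-1) (or_intror eq_refl) s t Hs ltac:(lra)) as H.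
  replace (-1 * (2 * K)) with (- (2 * K)) in H by ring. fold X in H.
  assert (Hexp : exp (- (2 * K) / t) <= 1)
    by (apply exp_le_1; unfold Rdiv; assert (0 < / t) by (apply Rinv_0_lt_compat; lra); nra).
  pose proof (Hrate t Hxt) as Hq. pose proof (Cmod_ge_0 (q t)).
  assert (Hq2 : Cmod (q t) ^ 2 <= (B / t) ^ 2) by (apply pow_incr; lra).
  assert ((B / t) ^ 2 <= B * B / t).
  { replace ((B / t) ^ 2) with (B * B / t * / t) by (field; lra).
    assert (0 <= B * B / t) by (apply Rdiv_le_0_compat; nra).
    assert (/ t <= 1) by (rewrite <- Rinv_1; apply Rinv_le_contravar; lra). nra. }
  pose proof (pow2_ge_0 (Cmod (q t))). nra. }
assert (Hpos : 0 < exp (- (2 * K) / s)) by apply exp_pos.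
pose proof (pow2_ge_0 (Cmod (q s))).
assert (Hz : Cmod (q s) ^ 2 = 0) by (unfold X in HX; nra).
destruct (Req_dec (Cmod (q s)) 0) as [|Hne]; [assumption|].
exfalso. exact (pow_nonzero _ 2 Hne Hz).
Qed.

End LinearEquation.

(** * The difference of two solutions *)

(* [ray_weight beta th r = e^x x^(-beta)] for [x = r e^(i th)]. *)
Definition ray_weight (beta : C) (th r : R) : C := cexp (ray th r - beta * (ln r, th))%C.

Lemma ray_weight_cancel (beta z : C) (th r : R) : - (PI / 2) < th < PI / 2 -> 0 < r ->
  (cexp (- ray th r) * Cppow (ray th r) beta * (z * ray_weight beta th r))%C = z.
Proof.
intros Hth Hr. rewrite Cppow_ray by auto. unfold ray_weight.
transitivity (z * (cexp (- ray th r) * cexp (beta * (ln r, th))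
                   * cexp (ray th r - beta * (ln r, th))))%C; [ring|].
rewrite !cexp_plus. replace (- ray th r + beta * (ln r, th) + (ray th r - beta * (ln r, th)))%C
  with (RtoC 0) by ring.
rewrite cexp_0. ring.
Qed.

Lemma is_derive_ray_weight (beta : C) (th r : R) : 0 < r ->
  is_derive_ReIm (ray_weight beta th) r (ray_weight beta th r * (ray_dir th - beta / RtoC r))%C.
Proof.
intros Hr. apply is_derive_ReIm_cexp.
eapply is_derive_ReIm_eq.
- apply is_derive_ReIm_minus; [apply is_derive_ReIm_scal_id|].
  apply is_derive_ReIm_mult; [apply is_derive_ReIm_const | apply is_derive_ReIm_ln_pair, Hr].
- assert (RtoC r <> 0%C) by (intros H; apply (f_equal fst) in H; simpl in H; lra).
  rewrite RtoC_inv by lra. fold (ray_dir th). field. auto.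
Qed.

Definition coupling (a b U0 U1 : C) : C :=
  (a * (U1 + U0) + b * (U1 * U1 + U1 * U0 + U0 * U0))%C.

(* The weight removes the linear part [-(1 - beta/x)] of the equation for [u1 - u0]. *)
Lemma weighted_difference_derive (a b beta : C) (th r : R) (u0 u1 : R -> C) : 0 < r ->
  is_derive_ReIm u0 r (ray_field a b beta th r (u0 r)) ->
  is_derive_ReIm u1 r (ray_field a b beta th r (u1 r)) ->
  is_derive_ReIm (fun s => (u1 s - u0 s) * ray_weight beta th s)%C r
    ((u1 r - u0 r) * ray_weight beta th r * (ray_dir th * coupling a b (u0 r) (u1 r)))%C.
Proof.
intros Hr D0 D1.
eapply is_derive_ReIm_eq.
- apply is_derive_ReIm_mult; [apply is_derive_ReIm_minus; eauto | apply is_derive_ray_weight, Hr].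
- assert (RtoC r <> 0%C) by (intros H; apply (f_equal fst) in H; simpl in H; lra).
  pose proof (ray_dir_neq0 th).
  unfold ray_field, coupling; cbv zeta. rewrite ray_eq. field. auto.
Qed.

Lemma Cmod_coupling_le (a b U0 U1 : C) (th A r : R) : 1 <= r ->
  Cmod U0 <= A / r ^ 2 -> Cmod U1 <= A / r ^ 2 ->
  Cmod (ray_dir th * coupling a b U0 U1)%C <= (Cmod a * (2 * A) + Cmod b * (3 * A ^ 2)) / r ^ 2.
Proof.
intros Hr H0 H1.
set (al := A / r ^ 2) in *.
pose proof (Cmod_ge_0 U0). pose proof (Cmod_ge_0 U1).
pose proof (Cmod_ge_0 a). pose proof (Cmod_ge_0 b).
assert (Hr2 : 1 <= r ^ 2) by (replace (r ^ 2) with (r * r) by ring; nra).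
assert (Hal2 : al ^ 2 <= A ^ 2 / r ^ 2).
{ unfold al. replace ((A / r ^ 2) ^ 2) with (A ^ 2 / r ^ 2 * / r ^ 2) by (field; lra).
  assert (/ r ^ 2 <= 1) by (rewrite <- Rinv_1; apply Rinv_le_contravar; lra).
  assert (0 <= A ^ 2 / r ^ 2) by (apply Rdiv_le_0_compat; [apply pow2_ge_0 | lra]). nra. }
rewrite Cmod_mult, Cmod_ray_dir, Rmult_1_l. unfold coupling.
eapply Rle_trans; [apply Cmod_triangle|]. rewrite !Cmod_mult.
eapply Rle_trans.
{ apply Rplus_le_compat; apply Rmult_le_compat_l; auto;
    [apply Cmod_triangle | eapply Rle_trans; [apply Cmod_triangle|]].
  apply Rplus_le_compat_r, Cmod_triangle. }
rewrite !Cmod_mult.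
assert (Cmod U1 * Cmod U1 + Cmod U1 * Cmod U0 + Cmod U0 * Cmod U0 <= 3 * al ^ 2) by nra.
assert (Cmod U1 + Cmod U0 <= 2 * al) by lra.
replace ((Cmod a * (2 * A) + Cmod b * (3 * A ^ 2)) / r ^ 2)
  with (Cmod a * (2 * al) + Cmod b * (3 * (A ^ 2 / r ^ 2))) by (unfold al; field; lra).
apply Rplus_le_compat; apply Rmult_le_compat_l; auto; lra.
Qed.

Lemma weighted_difference_linear_equation (a b beta : C) (theta r0 : R) (f0 f1 : C -> C) :
  - (PI / 2) < theta < PI / 2 ->
  ray_solution a b beta theta r0 f0 -> ray_solution a b beta theta r0 f1 ->
  filterlim (fun r => f0 (ray theta r)) (Rbar_locally p_infty) (locally (RtoC 0)) ->
  filterlim (fun r => f1 (ray theta r)) (Rbar_locally p_infty) (locally (RtoC 0)) ->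
  exists (psi : R -> C) (x0 K : R), 0 < x0 /\ 0 <= K /\
    (forall t, x0 < t ->
       is_derive_ReIm (fun r => (f1 (ray theta r) - f0 (ray theta r)) * ray_weight beta theta r)%C t
         ((f1 (ray theta t) - f0 (ray theta t)) * ray_weight beta theta t * psi t)%C) /\
    (forall t, x0 < t -> Cmod (psi t) <= K / t ^ 2).
Proof.
intros Hth S0 S1 L0 L1.
destruct (decaying_ray_solution_bound a b beta theta r0 f0 Hth S0 L0) as (A0 & R0 & HA0 & D0).
destruct (decaying_ray_solution_bound a b beta theta r0 f1 Hth S1 L1) as (A1 & R1 & HA1 & D1).
set (A := Rmax A0 A1).
exists (fun r => ray_dir theta * coupling a b (f0 (ray theta r)) (f1 (ray theta r)))%C,
  (Rmax (Rmax R0 R1) (Rmax r0 1)), (Cmod a * (2 * A) + Cmod b * (3 * A ^ 2)).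
assert (Hx0 : forall r, Rmax (Rmax R0 R1) (Rmax r0 1) < r -> R0 < r /\ R1 < r /\ r0 < r /\ 1 < r).
{ intros r Hr. apply Rmax_Rlt in Hr as [Hl Hr].
  apply Rmax_Rlt in Hl. apply Rmax_Rlt in Hr. tauto. }
split; [|split; [|split]].
- apply Rlt_le_trans with 1; [lra | eapply Rle_trans; apply Rmax_r].
- assert (0 <= A) by (apply Rle_trans with A0; [auto | apply Rmax_l]).
  pose proof (Cmod_ge_0 a). pose proof (Cmod_ge_0 b). pose proof (pow2_ge_0 A). nra.
- intros t Ht. destruct (Hx0 t Ht) as (_ & _ & Hrt & H1t).
  apply weighted_difference_derive; [lra | |]; eapply ray_solution_derive; eauto.
- intros t Ht. destruct (Hx0 t Ht) as (H0t & H1t & _ & Ht1).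
  assert (Hinv : 0 <= / t ^ 2) by (apply Rlt_le, Rinv_0_lt_compat, pow_lt; lra).
  apply Cmod_coupling_le; [lra | |]; eapply Rle_trans;
    [apply D0, H0t | | apply D1, H1t |]; apply Rmult_le_compat_r; auto;
    [apply Rmax_l | apply Rmax_r].
Qed.

Theorem mainTheorem11 (a b beta : C) (theta r0 : R) (f0 f1 : C -> C) :
  - (PI / 2) < theta < PI / 2 ->
  0 < r0 ->
  ray_solution a b beta theta r0 f0 ->
  ray_solution a b beta theta r0 f1 ->
  filterlim (fun r : R => f0 (ray theta r)) (Rbar_locally p_infty) (locally (RtoC 0)) ->
  filterlim (fun r : R => f1 (ray theta r)) (Rbar_locally p_infty) (locally (RtoC 0)) ->
  exists C0 : C,
    (exists eps : R -> C,
        filterlim eps (Rbar_locally p_infty) (locally (RtoC 0)) /\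
        exists R1 : R, forall r : R, R1 < r ->
          (f1 (ray theta r) - f0 (ray theta r)
           = cexp (- ray theta r) * Cppow (ray theta r) beta * (C0 + eps r))%C) /\
    (C0 = RtoC 0 ->
      exists R2 : R, forall r : R, R2 < r -> f1 (ray theta r) = f0 (ray theta r)).
Proof.
intros Hth _ S0 S1 L0 L1.
destruct (weighted_difference_linear_equation a b beta theta r0 f0 f1 Hth S0 S1 L0 L1)
  as (psi & x0 & K & Hx0 & HK & Hq & Hpsi).
set (g := fun r => (f1 (ray theta r) - f0 (ray theta r))%C) in Hq.
set (q := fun r => (g r * ray_weight beta theta r)%C) in Hq.
destruct (converges_at_rate q psi x0 K Hx0 HK Hq Hpsi) as (C0 & B & HC).
assert (Hg : forall r, x0 < r -> g r = (cexp (- ray theta r) * Cppow (ray theta r) beta * q r)%C)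
  by (intros r Hr; unfold q; rewrite ray_weight_cancel by (auto; lra); reflexivity).
exists C0. split.
- exists (fun r => q r - C0)%C. split; [exact (filterlim_of_Cmod_le_div _ B (x0 + 1) HC)|].
  exists (x0 + 1). intros r Hr. replace (C0 + (q r - C0))%C with (q r) by ring.
  apply Hg. lra.
- intros ->. exists x0. intros r Hr.
  assert (Hq0 : q r = 0%C).
  { apply (eq_zero_of_Cmod_le_div q psi x0 K Hx0 HK Hq Hpsi B (x0 + 1)); [|exact Hr].
    intros t Ht. replace (q t) with (q t - 0)%C by ring. apply HC, Ht. }
  assert (Hg0 : g r = 0%C) by (rewrite (Hg r Hr), Hq0; ring).
  replace (f1 (ray theta r)) with (g r + f0 (ray theta r))%C by (unfold g; ring).
  rewrite Hg0. ring.
Qed.
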